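(* Let $x_{k-1},x_k,x_{k+1}$ be consecutive Newton–Anderson iterates with $x_k,x_{k-1}\in B_{\hat r}(x^* )\setminus S$ under Assumption (A), and let $r^e_{k+1}$, $E_{k+1}$ and $S^w_{k+1}$ be as in the context. Suppose $r^e_{k+1}<1$ and there is an element $\tilde F\in S^w_{k+1}$ such that $\|\tilde F\|=\|E_{k+1}\|$ and $\|P_Ne_{k+1}-E_{k+1}\|=\|P_Nw^\alpha_{k+1}-\tilde F\|$. Then $$\|E_{k+1}\|\le\frac{\|P_Nw^\alpha_{k+1}\|}{1-r^e_{k+1}}.$$
   Context: $f:\mathbb{R}^n\to\mathbb{R}^n$ is $C^3$ with $f(x^* )=0$; norms are Euclidean; $N=\operatorname{null}f'(x^* )\neq\{0\}$, $R=\operatorname{range}f'(x^* )$, $\mathbb{R}^n=N\oplus R$, $P_N,P_R$ orthogonal projections; $S=\{x:\det f'(x)=0\}$. Iterates: $e_k=x_k-x^*$, $w_{k+1}=-f'(x_k)^{-1}f(x_k)$; Newton–Anderson: $x_1=x_0+w_1$, and for $k\ge1$, $\gamma_{k+1}=(w_{k+1}-w_k)^Tw_{k+1}/\|w_{k+1}-w_k\|^2$, $x_{k+1}=x_k+w_{k+1}-\gamma_{k+1}(x_k-x_{k-1}+w_{k+1}-w_k)$; $w^\alpha_{k+1}=(1-\gamma_{k+1})w_{k+1}+\gamma_{k+1}w_k$. $\hat D(x):N\to N$, $v\mapsto P_Nf''(x^* )(x-x^*,v)$. Assumption (A): for $x\in B_{\hat r}(x^* )\setminus S$, $\hat D(x)$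 is invertible on $N$, and $f'(x)^{-1}=\hat D(x)^{-1}P_N+\mathcal{O}(1)$ for $\|x-x^*\|<\hat r$. $T_kv=\tfrac12\hat D(x_k)^{-1}P_Nf''(x_k)(e_k,v)$. Let $P_Ne_k^\alpha=(1-\gamma_{k+1})P_Ne_k+\gamma_{k+1}P_Ne_{k-1}$ and $(T_kP_Re_k)^\alpha=(1-\gamma_{k+1})T_kP_Re_k+\gamma_{k+1}T_{k-1}P_Re_{k-1}$. Set $q:=e_{k+1}-\tfrac12P_Ne_k^\alpha-(T_kP_Re_k)^\alpha$ and $\tilde q:=w^\alpha_{k+1}+\tfrac12P_Ne_k^\alpha-\big((1-\gamma_{k+1})(T_k-I)P_Re_k+\gamma_{k+1}(T_{k-1}-I)P_Re_{k-1}\big)$. Let $a_1=\tfrac{1-\gamma_{k+1}}{2}P_Ne_k$, $a_2=\tfrac{\gamma_{k+1}}{2}P_Ne_{k-1}$, $a_3=(1-\gamma_{k+1})T_kP_Re_k$, $a_4=\gamma_{k+1}T_{k-1}P_Re_{k-1}$, $a_5=P_Nq$ (so $P_Ne_{k+1}=\sum a_i$), and $b_1=-a_1$, $b_2=-a_2$, $b_3=a_3$, $b_4=a_4$, $b_5=P_N\tilde q$ (so $P_Nw^\alpha_{k+1}=\sum b_i$). $S^e_{k+1}$ (resp. $S^w_{k+1}$) is the set of sums $\sum_{i\in I}a_i$ (resp. $\sum_{i\in I}b_i$) over nonempty proper subsets $I\subsetneq\{1,\dots,5\}$. $r^e_{k+1}=\min\{\|P_Ne_{k+1}-E\|/\|E\|:E\in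 S^e_{k+1},E\ne0\}$ and $E_{k+1}$ is an element of $S^e_{k+1}$ attaining this minimum. *)

(* Vectors of R^n are row vectors 'rV[R]_n;
   fprime(x) acts by v |-> v *m jacobian f x  (so fprime(x) v = 'd f x v). *)
From HB Require Import structures.
From mathcomp Require Import all_boot all_order all_algebra.
From mathcomp Require Import all_classical all_reals all_analysis.
Set Implicit Arguments. Unset Strict Implicit. Unset Printing Implicit Defensive.
Import Order.TTheory GRing.Theory Num.Theory.
Import numFieldNormedType.Exports.
Local Open Scope classical_set_scope.
Local Open Scope ring_scope.

Section NewtonAnderson.
Variables (R : realType) (n : nat).
Local Notation V := 'rV[R]_n.

Definition dotv (u v : V) : R := (u *m v^T) 0 0.
Definition enorm (v : V) : R := Num.sqrt (dotv v v).

Fixpoint Ck (k : nat) (g : V -> V) : Prop :=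
  match k with
  | 0 => continuous g
  | k'.+1 => (forall x, differentiable g x) /\ forall v : V, Ck k' ('D_v g)
  end.

Variable f : V -> V.

Definition d2f (x u v : V) : V := 'D_u ('D_v f) x.

Definition Ssing : set V := [set x | \det (jacobian f x) = 0].

Definition finv (x y : V) : V := y *m invmx (jacobian f x).

Variable xs : V.

Definition Nsp : set V := [set v | 'd f xs v = 0].
Definition Rsp : set V := range ('d f xs).

Definition direct_sum_NR : Prop :=
  (forall v, Nsp v -> Rsp v -> v = 0) /\
  (forall v, exists a b, Nsp a /\ Rsp b /\ v = a + b).

Definition is_orth_proj (A : set V) (P : V -> V) : Prop :=
  forall v, A (P v) /\ forall u, A u -> dotv (v - P v) u = 0.

Variable PN : V -> V.

Definition Dhat (x v : V) : V := PN (d2f xs (x - xs) v).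
(* hat D(x)^{-1} y : the (unique, under (A)) v in N with hat D(x) v = y *)
Definition Dhatinv (x y : V) : V := xget 0 [set v | Nsp v /\ Dhat x v = y].

Definition assumptionA (rhat : R) : Prop :=
  (forall x, enorm (x - xs) < rhat -> ~ Ssing x ->
     forall y, Nsp y -> exists! v, Nsp v /\ Dhat x v = y) /\
  (exists C : R, forall x, enorm (x - xs) < rhat -> ~ Ssing x ->
     forall y, enorm (finv x y - Dhatinv x (PN y)) <= C * enorm y).

(* Newton step w(y) = - fprime(y)^{-1} f(y); w_{j+1} = wN (x_j) *)
Definition wN (y : V) : V := - finv y (f y).

(* gamma_{j+1} *)
Definition gammaNA (x : nat -> V) (j : nat) : R :=
  dotv (wN (x j) - wN (x j.-1)) (wN (x j))
  / (enorm (wN (x j) - wN (x j.-1)) ^+ 2).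

Definition NA_iterates (x : nat -> V) (k : nat) : Prop :=
  x 1%N = x 0%N + wN (x 0%N) /\
  (forall j, (1 <= j <= k)%N ->
     x j.+1 = x j + wN (x j)
              - gammaNA x j *: (x j - x j.-1 + wN (x j) - wN (x j.-1))) /\
  (forall j, (j <= k)%N -> ~ Ssing (x j)) /\
  (forall j, (1 <= j <= k)%N -> wN (x j) != wN (x j.-1)).

Variable PR : V -> V.
Variables (x : nat -> V) (k : nat).

Definition err (j : nat) : V := x j - xs.
Definition gk : R := gammaNA x k.
Definition walpha : V := (1 - gk) *: wN (x k) + gk *: wN (x k.-1).

Definition Top (j : nat) (v : V) : V :=
  2^-1 *: Dhatinv (x j) (PN (d2f (x j) (err j) v)).

Definition PNea : V := (1 - gk) *: PN (err k) + gk *: PN (err k.-1).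
Definition TPRa : V :=
  (1 - gk) *: Top k (PR (err k)) + gk *: Top k.-1 (PR (err k.-1)).

Definition qv : V := err k.+1 - 2^-1 *: PNea - TPRa.
Definition qtv : V :=
  walpha + 2^-1 *: PNea
  - ((1 - gk) *: (Top k (PR (err k)) - PR (err k))
     + gk *: (Top k.-1 (PR (err k.-1)) - PR (err k.-1))).

Definition avec (i : 'I_5) : V :=
  match val i with
  | 0 => ((1 - gk) / 2) *: PN (err k)
  | 1 => (gk / 2) *: PN (err k.-1)
  | 2 => (1 - gk) *: Top k (PR (err k))
  | 3 => gk *: Top k.-1 (PR (err k.-1))
  | _ => PN qv
  end.

Definition bvec (i : 'I_5) : V :=
  match val i with
  | 0 => - (((1 - gk) / 2) *: PN (err k))
  | 1 => - ((gk / 2) *: PN (err k.-1))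
  | 2 => (1 - gk) *: Top k (PR (err k))
  | 3 => gk *: Top k.-1 (PR (err k.-1))
  | _ => PN qtv
  end.

Definition subsums (c : 'I_5 -> V) : set V :=
  [set E | exists I : {set 'I_5}, I != finset.set0 /\ I != finset.setT /\
                                  E = \sum_(i in I) c i].

Definition Se : set V := subsums avec.
Definition Sw : set V := subsums bvec.

Definition is_re_min (re : R) (E : V) : Prop :=
  Se E /\ E != 0 /\
  re = enorm (PN (err k.+1) - E) / enorm E /\
  (forall E', Se E' -> E' != 0 -> re <= enorm (PN (err k.+1) - E') / enorm E').

End NewtonAnderson.

From HB Require Import structures.
From mathcomp Require Import all_boot all_order all_algebra.
From mathcomp Require Import all_classical all_reals all_analysis.
From mathcomp Require Import ring lra.
Import Order.TTheory GRing.Theory Num.Theory.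
Import numFieldNormedType.Exports.
Local Open Scope classical_set_scope.
Local Open Scope ring_scope.

(* Only the norm identities of the hypotheses matter: since ‖F̃‖ = ‖E‖ and
   ‖P_N w^α - F̃‖ = ‖P_N e_{k+1} - E‖ = r ‖E‖, the triangle inequality gives
   ‖E‖ ≤ ‖P_N w^α‖ + r ‖E‖, and r < 1 lets us solve for ‖E‖. *)

Section EuclideanNorm.
Variables (R : realType) (n : nat).
Implicit Types u v : 'rV[R]_n.

Lemma dotvE u v : dotv u v = \sum_j u 0 j * v 0 j.
Proof. by rewrite /dotv mxE; apply: eq_bigr => j _; rewrite mxE. Qed.

Lemma dotvv_ge0 u : 0 <= dotv u u.
Proof. by rewrite dotvE; apply: sumr_ge0 => j _; rewrite -expr2 sqr_ge0. Qed.

Lemma enorm_ge0 u : 0 <= enorm u.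
Proof. exact: sqrtr_ge0. Qed.

Lemma sqr_enorm u : enorm u ^+ 2 = dotv u u.
Proof. by rewrite sqr_sqrtr // dotvv_ge0. Qed.

Lemma enorm_eq0 u : (enorm u == 0) = (u == 0).
Proof.
apply/eqP/eqP => [u0|->]; last first.
  by rewrite /enorm dotvE big1 ?sqrtr0 // => j _; rewrite mxE mul0r.
have : dotv u u == 0 by rewrite -sqr_enorm u0 expr0n.
rewrite dotvE psumr_eq0 => [/allP uu0|j _]; last by rewrite -expr2 sqr_ge0.
apply/rowP => j; rewrite mxE; apply/eqP.
by have := uu0 j (mem_index_enum j); rewrite /= mulf_eq0 orbb.
Qed.

Lemma enorm_gt0 u : (0 < enorm u) = (u != 0).
Proof. by rewrite lt_def enorm_eq0 enorm_ge0 andbT. Qed.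

Lemma enormN u : enorm (- u) = enorm u.
Proof. by rewrite /enorm !dotvE; congr Num.sqrt; apply: eq_bigr => j _; rewrite !mxE mulrNN. Qed.

Lemma CauchySchwarz_dotv u v : dotv u v <= enorm u * enorm v.
Proof.
have [->|u0] := eqVneq u 0.
  by rewrite dotvE big1 => [|j _]; rewrite ?mxE ?mul0r // mulr_ge0 ?enorm_ge0.
have [->|v0] := eqVneq v 0.
  by rewrite dotvE big1 => [|j _]; rewrite ?mxE ?mulr0 // mulr_ge0 ?enorm_ge0.
set s := enorm u; set t := enorm v.
have s_gt0 : 0 < s by rewrite enorm_gt0.
have t_gt0 : 0 < t by rewrite enorm_gt0.
have := dotvv_ge0 (t *: u - s *: v).
have -> : dotv (t *: u - s *: v) (t *: u - s *: v) =
          t ^+ 2 * dotv u u - 2 * t * s * dotv u v + s ^+ 2 * dotv v v.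
  rewrite !dotvE !mulr_sumr -sumrB -big_split /=.
  by apply: eq_bigr => j _; rewrite !mxE; ring.
rewrite -!sqr_enorm -/s -/t => expansion_ge0.
have : 0 <= 2 * t * s * (s * t - dotv u v) by nra.
by rewrite pmulr_rge0 ?subr_ge0 // !mulr_gt0.
Qed.

Lemma ler_enormD u v : enorm (u + v) <= enorm u + enorm v.
Proof.
rewrite -(ler_pXn2r (n := 2)) ?nnegrE ?addr_ge0 ?enorm_ge0 //.
have -> : enorm (u + v) ^+ 2 = enorm u ^+ 2 + 2 * dotv u v + enorm v ^+ 2.
  rewrite !sqr_enorm !dotvE mulr_sumr -!big_split /=.
  by apply: eq_bigr => j _; rewrite !mxE; ring.
have := CauchySchwarz_dotv u v; nra.
Qed.

Lemma ler_enorm_distD u v : enorm v <= enorm u + enorm (u - v).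
Proof.
rewrite -(enormN (u - v)); apply: le_trans (ler_enormD _ _).
by rewrite opprB addrC subrK.
Qed.

End EuclideanNorm.

Lemma is_re_min_residual (R : realType) (n : nat) (f : 'rV[R]_n -> 'rV[R]_n)
    (xs : 'rV[R]_n) (PN PR : 'rV[R]_n -> 'rV[R]_n) (x : nat -> 'rV[R]_n)
    (k : nat) (re : R) (E : 'rV[R]_n) :
  is_re_min f xs PN PR x k re E ->
  E != 0 /\ enorm (PN (err xs x k.+1) - E) = re * enorm E.
Proof.
move=> [_ [E0 [-> _]]]; split=> //.
by rewrite mulrVK // unitfE enorm_eq0.
Qed.

Theorem proposition4p3 (R : realType) (n : nat) (f : 'rV[R]_n -> 'rV[R]_n)
  (xs : 'rV[R]_n) (PN PR : 'rV[R]_n -> 'rV[R]_n) (rhat : R)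
  (x : nat -> 'rV[R]_n) (k : nat) (re : R) (E : 'rV[R]_n) :
  Ck 3 f ->
  f xs = 0 ->
  (exists v, Nsp f xs v /\ v != 0) ->
  direct_sum_NR f xs ->
  is_orth_proj (Nsp f xs) PN ->
  is_orth_proj (Rsp f xs) PR ->
  assumptionA f xs PN rhat ->
  (1 <= k)%N ->
  NA_iterates f x k ->
  enorm (x k - xs) < rhat -> ~ Ssing f (x k) ->
  enorm (x k.-1 - xs) < rhat -> ~ Ssing f (x k.-1) ->
  is_re_min f xs PN PR x k re E ->
  re < 1 ->
  (exists Ft, Sw f xs PN PR x k Ft /\ enorm Ft = enorm E /\
     enorm (PN (err xs x k.+1) - E) = enorm (PN (walpha f x k) - Ft)) ->
  enorm E <= enorm (PN (walpha f x k)) / (1 - re).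
Proof.
move=> _ _ _ _ _ _ _ _ _ _ _ _ _ /is_re_min_residual[E0 residualE] re_lt1.
move=> [Ft [_ [FtE residualF]]].
set w := PN (walpha f x k) in residualF *.
have E_gt0 : 0 < enorm E by rewrite enorm_gt0.
have triangle : enorm E <= enorm w + re * enorm E.
  by rewrite -residualE residualF -{1}FtE ler_enorm_distD.
by rewrite ler_pdivlMr ?subr_gt0 //; nra.
Qed.
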